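(* Let $\lambda_1,\lambda_2\ge0$ and $\mathbf m\in\mathcal B(\lambda+\rho)_{res}$, and let $i\in\{1,2\}$. If $e_i(A(\mathbf m))\ne0$, then $e_i(\mathbf m)\in\mathcal B(\lambda+\rho)_{res}$ and $A(e_i(\mathbf m))=e_i(A(\mathbf m))$; likewise, if $f_i(A(\mathbf m))\ne0$, then $f_i(\mathbf m)\in\mathcal B(\lambda+\rho)_{res}$ and $A(f_i(\mathbf m))=f_i(A(\mathbf m))$. In particular the image $\mathrm{Arr}(\lambda)=A(\mathcal B(\lambda+\rho)_{res})$ is closed under the operators $e_1,e_2,f_1,f_2$ (wherever they are nonzero).
   Context: For $\mathbf m\in\mathbb Z_{\ge0}^6$ and integers $\lambda_1,\lambda_2\ge0$: $s_1=\lambda_2+m_5+m_6-m_1-m_2-m_3$, $s_2=\lambda_2+m_5+m_6-m_2-2m_3$, $s_3=\lambda_2+m_6-m_3-m_4$, $s_4=\lambda_2+m_6-m_4-m_5$, $s_5=\lambda_2-m_5$, $s_6=\lambda_1-m_6$. $\mathcal B(\lambda+\rho)_{res}$ is the set of $\mathbf m$ with $m_3=m_5$, $s_j\ge-1$ for $j\in\{1,2,5,6\}$, $s_3=s_4\le0$ even; decoration $d(\mathbf m)=-s_3/2$. An array is $\left[\begin{smallmatrix}a&b&c&b&d\\&x&y&z&\\&&k&&\end{smallmatrix}\right]$ with all entries in $\mathbb Z_{\ge0}$ (second entry equal to fourth in the top row); $k$ is its decoration and $a+6b+2c+d$ its weight. Raising operators: $e_1$ sends it to $\left[\begin{smallmatrix}a-1&b&c+1&b&d-1\\&x&y+1&z&\\&&k+1&&\end{smallmatrix}\right]$,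 or to $0$ if $\min\{a,d\}=0$; $e_2$ sends it to $\left[\begin{smallmatrix}a&b-1&c+3&b-1&d\\&x+1&y&z+1&\\&&k+1&&\end{smallmatrix}\right]$, or to $0$ if $b=0$. Lowering operators: $f_1$ sends it to $\left[\begin{smallmatrix}a+1&b&c-1&b&d+1\\&x&y-1&z&\\&&k-1&&\end{smallmatrix}\right]$, or $0$ if $\min\{c,y,k\}=0$; $f_2$ sends it to $\left[\begin{smallmatrix}a&b+1&c-3&b+1&d\\&x-1&y&z-1&\\&&k-1&&\end{smallmatrix}\right]$, or $0$ if $\min\{x,z,k\}=0$ or $c<3$. For $\mathbf m\in\mathcal B(\lambda+\rho)_{res}$, $A(\mathbf m)=\left[\begin{smallmatrix}m_2&m_5&m_4&m_5&m_6\\&s_2+1&s_6+1&s_5+1&\\&&d(\mathbf m)&&\end{smallmatrix}\right]$. On Lusztig data define $e_1(\mathbf m)=(m_1,m_2-1,m_3,m_4+1,m_5,m_6-1)$, $e_2(\mathbf m)=(m_1,m_2,m_3-1,m_4+3,m_5-1,m_6)$, $f_1(\mathbf m)=(m_1,m_2+1,m_3,m_4-1,m_5,m_6+1)$, $f_2(\mathbf m)=(m_1,m_2,m_3+1,m_4-3,m_5+1,m_6)$. *)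

From Stdlib Require Import ZArith Lia.
Open Scope Z_scope.

(* Lusztig datum m = (m1,...,m6) in Z^6 (nonnegativity imposed in B_res). *)
Record LD := mkLD { m1 : Z; m2 : Z; m3 : Z; m4 : Z; m5 : Z; m6 : Z }.

Definition s1 (l1 l2 : Z) (m : LD) := l2 + m5 m + m6 m - m1 m - m2 m - m3 m.
Definition s2 (l1 l2 : Z) (m : LD) := l2 + m5 m + m6 m - m2 m - 2 * m3 m.
Definition s3 (l1 l2 : Z) (m : LD) := l2 + m6 m - m3 m - m4 m.
Definition s4 (l1 l2 : Z) (m : LD) := l2 + m6 m - m4 m - m5 m.
Definition s5 (l1 l2 : Z) (m : LD) := l2 - m5 m.
Definition s6 (l1 l2 : Z) (m : LD) := l1 - m6 m.

Definition Bres (l1 l2 : Z) (m : LD) : Prop :=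
  0 <= m1 m /\ 0 <= m2 m /\ 0 <= m3 m /\ 0 <= m4 m /\ 0 <= m5 m /\ 0 <= m6 m /\
  m3 m = m5 m /\
  -1 <= s1 l1 l2 m /\ -1 <= s2 l1 l2 m /\ -1 <= s5 l1 l2 m /\ -1 <= s6 l1 l2 m /\
  s3 l1 l2 m = s4 l1 l2 m /\ s3 l1 l2 m <= 0 /\ Z.Even (s3 l1 l2 m).

(* decoration d(m) = -s3/2 (exact since s3 is even on Bres) *)
Definition deco (l1 l2 : Z) (m : LD) : Z := - (s3 l1 l2 m) / 2.

(* Array [a b c b d ; x y z ; k]; the repeated top entry b is stored once. *)
Record Arr := mkArr { aa : Z; ab : Z; ac : Z; ad : Z;
                      ax : Z; ay : Z; az : Z; ak : Z }.

Definition isArray (T : Arr) : Prop :=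
  0 <= aa T /\ 0 <= ab T /\ 0 <= ac T /\ 0 <= ad T /\
  0 <= ax T /\ 0 <= ay T /\ 0 <= az T /\ 0 <= ak T.

Inductive Idx := i1 | i2.

(* Operators on arrays; None stands for 0. *)
Definition eArr (i : Idx) (T : Arr) : option Arr :=
  match i with
  | i1 => if Z.eqb (Z.min (aa T) (ad T)) 0 then None else
          Some (mkArr (aa T - 1) (ab T) (ac T + 1) (ad T - 1)
                      (ax T) (ay T + 1) (az T) (ak T + 1))
  | i2 => if Z.eqb (ab T) 0 then None else
          Some (mkArr (aa T) (ab T - 1) (ac T + 3) (ad T)
                      (ax T + 1) (ay T) (az T + 1) (ak T + 1))
  end.

Definition fArr (i : Idx) (T : Arr) : option Arr :=
  match i with
  | i1 => if Z.eqb (Z.min (Z.min (ac T) (ay T)) (ak T)) 0 then None else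
          Some (mkArr (aa T + 1) (ab T) (ac T - 1) (ad T + 1)
                      (ax T) (ay T - 1) (az T) (ak T - 1))
  | i2 => if orb (Z.eqb (Z.min (Z.min (ax T) (az T)) (ak T)) 0) (Z.ltb (ac T) 3)
          then None else
          Some (mkArr (aa T) (ab T + 1) (ac T - 3) (ad T)
                      (ax T - 1) (ay T) (az T - 1) (ak T - 1))
  end.

Definition Amap (l1 l2 : Z) (m : LD) : Arr :=
  mkArr (m2 m) (m5 m) (m4 m) (m6 m)
        (s2 l1 l2 m + 1) (s6 l1 l2 m + 1) (s5 l1 l2 m + 1) (deco l1 l2 m).

Definition eLD (i : Idx) (m : LD) : LD :=
  match i with
  | i1 => mkLD (m1 m) (m2 m - 1) (m3 m) (m4 m + 1) (m5 m) (m6 m - 1)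
  | i2 => mkLD (m1 m) (m2 m) (m3 m - 1) (m4 m + 3) (m5 m - 1) (m6 m)
  end.

Definition fLD (i : Idx) (m : LD) : LD :=
  match i with
  | i1 => mkLD (m1 m) (m2 m + 1) (m3 m) (m4 m - 1) (m5 m) (m6 m + 1)
  | i2 => mkLD (m1 m) (m2 m) (m3 m + 1) (m4 m - 3) (m5 m + 1) (m6 m)
  end.

Definition inArrLam (l1 l2 : Z) (T : Arr) : Prop :=
  exists m, Bres l1 l2 m /\ Amap l1 l2 m = T.

(** The operators [e_i], [f_i] on Lusztig data are affine shifts of
    [(m2, m3, m4, m5, m6)], and each of them moves every [s_j] by a constant:
    [e_1] and [e_2] lower [s3 = s4] by [2] and so raise the decoration by one,
    [f_1] and [f_2] do the opposite, while the remaining entries of [A(m)] move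
    exactly as the corresponding array operator prescribes.  Nonvanishing of the
    array operator is precisely the positivity needed for the shifted datum to
    stay in [B(lambda+rho)_res], so [A] intertwines the two families of
    operators, and [Arr(lambda)] is closed under them. *)

From Stdlib Require Import ZArith Lia.
Open Scope Z_scope.

Definition e_admissible (i : Idx) (T : Arr) : Prop :=
  match i with
  | i1 => 0 < aa T /\ 0 < ad T
  | i2 => 0 < ab T
  end.

Definition f_admissible (i : Idx) (T : Arr) : Prop :=
  match i with
  | i1 => 0 < ac T /\ 0 < ay T /\ 0 < ak T
  | i2 => 0 < ax T /\ 0 < az T /\ 0 < ak T /\ 3 <= ac T
  end.

Lemma eArr_admissible (i : Idx) (T : Arr) :
  isArray T -> eArr i T <> None -> e_admissible i T.
Proof.
  intros (Ha & Hb & _ & Hd & _) Hne; destruct i; cbn in *.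
  - destruct (Z.eqb_spec (Z.min (aa T) (ad T)) 0); [congruence | lia].
  - destruct (Z.eqb_spec (ab T) 0); [congruence | lia].
Qed.

Lemma fArr_admissible (i : Idx) (T : Arr) :
  isArray T -> fArr i T <> None -> f_admissible i T.
Proof.
  intros (_ & _ & Hc & _ & Hx & Hy & Hz & Hk) Hne; destruct i; cbn in *.
  - destruct (Z.eqb_spec (Z.min (Z.min (ac T) (ay T)) (ak T)) 0); [congruence | lia].
  - destruct (Z.eqb_spec (Z.min (Z.min (ax T) (az T)) (ak T)) 0),
      (Z.ltb_spec (ac T) 3); cbn in Hne; try congruence; lia.
Qed.

Lemma deco_of_s3 (l1 l2 : Z) (m : LD) (k : Z) : s3 l1 l2 m = -2 * k -> deco l1 l2 m = k.
Proof.
  unfold deco; intros ->.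
  replace (- (-2 * k)) with (k * 2) by ring.
  apply Z.div_mul; lia.
Qed.

Lemma Bres_deco (l1 l2 : Z) (m : LD) :
  Bres l1 l2 m -> s3 l1 l2 m = -2 * deco l1 l2 m /\ 0 <= deco l1 l2 m.
Proof.
  intros (_ & _ & _ & _ & _ & _ & _ & _ & _ & _ & _ & _ & Hle & j & Hj).
  rewrite (deco_of_s3 l1 l2 m (- j)) by lia; lia.
Qed.

Lemma Amap_isArray (l1 l2 : Z) (m : LD) : Bres l1 l2 m -> isArray (Amap l1 l2 m).
Proof.
  intros HB; pose proof (Bres_deco l1 l2 m HB) as [_ Hd].
  destruct HB as (_ & H2 & _ & H4 & H5 & H6 & _ & _ & Hs2 & Hs5 & Hs6 & _).
  unfold isArray, Amap; cbn; lia.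
Qed.

Lemma s3_eLD (l1 l2 : Z) (i : Idx) (m : LD) : s3 l1 l2 (eLD i m) = s3 l1 l2 m - 2.
Proof. destruct i; unfold s3; cbn; lia. Qed.

Lemma s3_fLD (l1 l2 : Z) (i : Idx) (m : LD) : s3 l1 l2 (fLD i m) = s3 l1 l2 m + 2.
Proof. destruct i; unfold s3; cbn; lia. Qed.

Lemma deco_eLD (l1 l2 : Z) (i : Idx) (m : LD) :
  Bres l1 l2 m -> deco l1 l2 (eLD i m) = deco l1 l2 m + 1.
Proof.
  intros HB; apply deco_of_s3; rewrite s3_eLD.
  pose proof (Bres_deco l1 l2 m HB); lia.
Qed.

Lemma deco_fLD (l1 l2 : Z) (i : Idx) (m : LD) :
  Bres l1 l2 m -> deco l1 l2 (fLD i m) = deco l1 l2 m - 1.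
Proof.
  intros HB; apply deco_of_s3; rewrite s3_fLD.
  pose proof (Bres_deco l1 l2 m HB); lia.
Qed.

Lemma Bres_eLD (l1 l2 : Z) (i : Idx) (m : LD) :
  Bres l1 l2 m -> e_admissible i (Amap l1 l2 m) -> Bres l1 l2 (eLD i m).
Proof.
  intros HB Hadm.
  pose proof (Bres_deco l1 l2 m HB) as [Hs3 Hd].
  set (d := deco l1 l2 m) in *.
  destruct HB as (H1 & H2 & H3 & H4 & H5 & H6 & H35 & Hs1 & Hs2 & Hs5 & Hs6 & Hs34 & _).
  destruct i; cbn in Hadm;
    unfold Bres, s1, s2, s3, s4, s5, s6 in *; cbn [eLD fLD m1 m2 m3 m4 m5 m6] in *;
    repeat split; try lia; unfold Z.Even; exists (- (d + 1)); lia.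
Qed.

Lemma Bres_fLD (l1 l2 : Z) (i : Idx) (m : LD) :
  Bres l1 l2 m -> f_admissible i (Amap l1 l2 m) -> Bres l1 l2 (fLD i m).
Proof.
  intros HB Hadm.
  pose proof (Bres_deco l1 l2 m HB) as [Hs3 Hd].
  set (d := deco l1 l2 m) in *.
  destruct HB as (H1 & H2 & H3 & H4 & H5 & H6 & H35 & Hs1 & Hs2 & Hs5 & Hs6 & Hs34 & _).
  destruct i; cbn in Hadm;
    unfold Bres, s1, s2, s3, s4, s5, s6 in *; cbn [eLD fLD m1 m2 m3 m4 m5 m6] in *;
    repeat split; try lia; unfold Z.Even; exists (- (d - 1)); lia.
Qed.

Lemma eArr_Amap (l1 l2 : Z) (i : Idx) (m : LD) :
  Bres l1 l2 m -> e_admissible i (Amap l1 l2 m) ->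
  eArr i (Amap l1 l2 m) = Some (Amap l1 l2 (eLD i m)).
Proof.
  intros HB Hadm; pose proof (deco_eLD l1 l2 i m HB) as Hd.
  unfold Amap in *; rewrite Hd.
  destruct i; cbn [eArr e_admissible eLD aa ab ac ad ax ay az ak] in *;
    rewrite (proj2 (Z.eqb_neq _ 0)) by lia;
    unfold s2, s5, s6; cbn [m1 m2 m3 m4 m5 m6]; do 2 f_equal; lia.
Qed.

Lemma fArr_Amap (l1 l2 : Z) (i : Idx) (m : LD) :
  Bres l1 l2 m -> f_admissible i (Amap l1 l2 m) ->
  fArr i (Amap l1 l2 m) = Some (Amap l1 l2 (fLD i m)).
Proof.
  intros HB Hadm; pose proof (deco_fLD l1 l2 i m HB) as Hd.
  unfold Amap in *; rewrite Hd.
  destruct i; cbn [fArr f_admissible fLD aa ab ac ad ax ay az ak] in *.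
  - rewrite (proj2 (Z.eqb_neq _ 0)) by lia.
    unfold s2, s5, s6; cbn [m1 m2 m3 m4 m5 m6]; do 2 f_equal; lia.
  - rewrite (proj2 (Z.eqb_neq _ 0)), (proj2 (Z.ltb_ge _ _)) by lia.
    unfold s2, s5, s6; cbn [m1 m2 m3 m4 m5 m6 orb]; do 2 f_equal; lia.
Qed.

Lemma Amap_eLD (l1 l2 : Z) (i : Idx) (m : LD) :
  Bres l1 l2 m -> eArr i (Amap l1 l2 m) <> None ->
  Bres l1 l2 (eLD i m) /\ Some (Amap l1 l2 (eLD i m)) = eArr i (Amap l1 l2 m).
Proof.
  intros HB Hne.
  pose proof (eArr_admissible i _ (Amap_isArray l1 l2 m HB) Hne) as Hadm.
  split; [exact (Bres_eLD l1 l2 i m HB Hadm) | symmetry; exact (eArr_Amap l1 l2 i m HB Hadm)].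
Qed.

Lemma Amap_fLD (l1 l2 : Z) (i : Idx) (m : LD) :
  Bres l1 l2 m -> fArr i (Amap l1 l2 m) <> None ->
  Bres l1 l2 (fLD i m) /\ Some (Amap l1 l2 (fLD i m)) = fArr i (Amap l1 l2 m).
Proof.
  intros HB Hne.
  pose proof (fArr_admissible i _ (Amap_isArray l1 l2 m HB) Hne) as Hadm.
  split; [exact (Bres_fLD l1 l2 i m HB Hadm) | symmetry; exact (fArr_Amap l1 l2 i m HB Hadm)].
Qed.

Theorem mainTheorem7 (l1 l2 : Z) (hl1 : 0 <= l1) (hl2 : 0 <= l2) :
  (forall (m : LD) (i : Idx), Bres l1 l2 m ->
     (eArr i (Amap l1 l2 m) <> None ->
        Bres l1 l2 (eLD i m) /\ Some (Amap l1 l2 (eLD i m)) = eArr i (Amap l1 l2 m)) /\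
     (fArr i (Amap l1 l2 m) <> None ->
        Bres l1 l2 (fLD i m) /\ Some (Amap l1 l2 (fLD i m)) = fArr i (Amap l1 l2 m))) /\
  (forall (T T' : Arr) (i : Idx), inArrLam l1 l2 T ->
     (eArr i T = Some T' -> inArrLam l1 l2 T') /\
     (fArr i T = Some T' -> inArrLam l1 l2 T')).
Proof.
  split.
  - intros m i HB; split; [apply Amap_eLD | apply Amap_fLD]; exact HB.
  - intros T T' i [m [HB <-]]; split; intros HT.
    + destruct (Amap_eLD l1 l2 i m HB) as [HB' HA]; [congruence |].
      exists (eLD i m); split; congruence.
    + destruct (Amap_fLD l1 l2 i m HB) as [HB' HA]; [congruence |].
      exists (fLD i m); split; congruence.
Qed.
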